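(* Let $p$ be a prime and $k\ge0$ an integer; put $f=2$ if $p=2$ and $f=1$ if $p>2$, and $d=f\cdot p^{2k}$. Let $r$ be a positive integer with $r\ge\lceil\sqrt{f d/2}\,\rceil$ such that, if $d>1$, then $p\nmid r$. Put $n=p^k r$ and $$a=2n+d=2p^kr+f p^{2k},\qquad b=2n+\frac{2n^2}{d}=2p^kr+\frac{2r^2}{f},\qquad c=b+d=2p^kr+\frac{2r^2}{f}+fp^{2k}.$$ Then $(a,b,c)$ is an IDPT. Moreover, every IDPT $(a,b,c)$ with $c-b=f\cdot p^{2k}$ arises in this way from some such $r$.
   Context: A Diophantine Pythagorean Triangle (DPT) is a triple $(a,b,c)$ of positive integers with $a<b<c$ and $a^2+b^2=c^2$. An IDPT is a DPT with $\gcd(a,b,c)=1$. $\lceil x\rceil$ is the smallest integer $\ge x$. *)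

From Stdlib Require Import Reals ZArith.
From mathcomp Require Import all_boot.

Definition Rceil (x : R) : Z := (- Int_part (- x))%Z.

Definition DPT (a b c : nat) : Prop :=
  [/\ 0 < a, a < b, b < c & a ^ 2 + b ^ 2 = c ^ 2].

Definition IDPT (a b c : nat) : Prop :=
  DPT a b c /\ gcdn (gcdn a b) c = 1.

Definition fpar (p : nat) : nat := if p == 2 then 2 else 1.

Definition dpar (p k : nat) : nat := fpar p * p ^ (2 * k).

Definition admissible (p k r : nat) : Prop :=
  [/\ 0 < r,
      (Rceil (sqrt (INR (fpar p * dpar p k) / 2)) <= Z.of_nat r)%Z
    & (1 < dpar p k -> ~~ (p %| r))].

(* n = p^k r ; a = 2n + d ; b = 2n + 2 r^2 / f ; c = b + d.
   (2 r^2 / f is an exact division since f ∈ {1,2}.) *)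
Definition triple_a (p k r : nat) : nat := 2 * (p ^ k * r) + dpar p k.
Definition triple_b (p k r : nat) : nat := 2 * (p ^ k * r) + (2 * r ^ 2) %/ fpar p.
Definition triple_c (p k r : nat) : nat := triple_b p k r + dpar p k.

From Stdlib Require Import Reals ZArith Lra Lia.
From mathcomp Require Import all_boot zify.

(* If c = b + d, the Pythagorean equation reads a^2 = d (2b + d).  Writing
   d = f P^2 with P = p^k, P divides a and s = a / P satisfies
   s^2 = 2fb + (fP)^2, so s = fP + 2r, and solving for a and b gives exactly
   the stated triple; conversely that triple satisfies a polynomial identity.
   The condition a < b becomes (fP)^2 < 2r^2, whose weak form is the ceiling
   condition (equality would make sqrt 2 rational).  Finally
   gcd(a,b,c) = gcd(b,c) = gcd(b,d), and d is a power of p, so the triple is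
   primitive iff d = 1 or p does not divide b, i.e. does not divide r. *)

Section Ceiling.
Local Open Scope R_scope.

Lemma Rceil_sqrt_half_le (X r : nat) :
  (Rceil (sqrt (INR X / 2)) <= Z.of_nat r)%Z <-> (X <= 2 * r ^ 2)%N.
Proof.
rewrite /Rceil /Int_part.
have X_ge0 : 0 <= INR X / 2 by have := pos_INR X; lra.
have := sqrt_pos (INR X / 2); have := sqrt_sqrt _ X_ge0.
set s := sqrt _ => s2 s_ge0.
have [up_gt up_le] := archimed (- s).
have r_ge0 := pos_INR r.
have -> : (X <= 2 * r ^ 2)%N <-> INR X <= 2 * INR r * INR r.
  have <- : INR (2 * r * r) = 2 * INR r * INR r by rewrite !mult_INR.
  rewrite -mulnA mulnn; split; [move/leP; exact: le_INR | by move/INR_le/leP].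
split=> [le_sr | le_Xr].
- have : IZR (1 - Z.of_nat r) <= IZR (up (- s)) by apply: IZR_le; lia.
  rewrite minus_IZR -INR_IZR_INZ; nra.
- have s_le : s <= INR r by nra.
  have : IZR (- Z.of_nat r) < IZR (up (- s)).
    by rewrite opp_IZR -INR_IZR_INZ; lra.
  move/lt_IZR; lia.
Qed.

End Ceiling.

(* The 2-adic valuations of the two sides have different parities. *)
Lemma sqr_neq_double_sqr (x y : nat) : 0 < y -> x ^ 2 != 2 * y ^ 2.
Proof.
move=> y_gt0; apply/eqP=> e.
have x_gt0 : 0 < x by case: x e => // e; nia.
have := congr1 (logn 2) e.
rewrite lognM ?expn_gt0 ?y_gt0 // !lognX (logn_prime 2 (isT : prime 2)) /=.
lia.
Qed.

Lemma gcdn_pythag (a b c : nat) :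
  a ^ 2 + b ^ 2 = c ^ 2 -> gcdn (gcdn a b) c = gcdn b c.
Proof.
move=> abc; rewrite -gcdnA; apply/gcdn_idPr.
have bc_a2 := dvdn_exp2r 2 (dvdn_gcdl b c).
rewrite -(dvdn_pexp2r _ _ (isT : 0 < 2)) -(dvdn_addl _ bc_a2).
by rewrite abc dvdn_exp2r ?dvdn_gcdr.
Qed.

Lemma IDPT_add_prime_power (p e a b : nat) : prime p ->
  DPT a b (b + p ^ e) ->
  IDPT a b (b + p ^ e) <-> (1 < p ^ e -> ~~ (p %| b)).
Proof.
move=> p_pr dpt; have [_ _ _ pyth] := dpt.
rewrite /IDPT gcdn_pythag // gcdnDl.
suff : gcdn b (p ^ e) = 1 <-> (1 < p ^ e -> ~~ (p %| b)) by tauto.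
clear dpt pyth; case: e => [|e]; first by rewrite expn0 gcdn1.
have p_e_gt1 : 1 < p ^ e.+1.
  exact: leq_ltn_trans (ltn0Sn e) (ltn_expl _ (prime_gt1 p_pr)).
have -> : (gcdn b (p ^ e.+1) = 1) <-> coprime b (p ^ e.+1) by split=> /eqP.
by rewrite coprime_pexpr // coprime_sym prime_coprime //; tauto.
Qed.

Lemma sqr_eq_double_add_sqr (s t n : nat) :
  s ^ 2 = 2 * n + t ^ 2 -> exists r, s = t + 2 * r /\ n = 2 * r * (r + t).
Proof.
move=> st.
have [j sE] : exists j, s = t + j.
  by exists (s - t); rewrite subnKC // -leq_sqr st leq_addl.
subst s.
have j2 : j ^ 2 + 2 * (t * j) = 2 * n by nia.
have j_even : odd j = false.
  by move/(congr1 odd): j2; rewrite oddD !oddM andbb /= addbF.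
have [r jE] : exists r, j = 2 * r.
  by exists j./2; rewrite -{1}(odd_double_half j) j_even add0n mul2n.
by subst j; exists r; split; nia.
Qed.

Section PythagoreanFamily.

Context {f g P : nat}.
Hypothesis fg : f * g = 2.

Let fg_cases : (f = 1 /\ g = 2) \/ (f = 2 /\ g = 1).
Proof. by case: f fg => [|[|[|f']]]; case: g => [|[|[|g']]]; try lia; auto. Qed.

Lemma pythag_family (r : nat) :
  (2 * (P * r) + f * P ^ 2) ^ 2 + (2 * (P * r) + g * r ^ 2) ^ 2
  = (2 * (P * r) + g * r ^ 2 + f * P ^ 2) ^ 2.
Proof. by case: fg_cases => -[-> ->]; nia. Qed.

Lemma pythag_family_lt (r : nat) :
  (2 * (P * r) + f * P ^ 2 < 2 * (P * r) + g * r ^ 2) = ((f * P) ^ 2 < 2 * r ^ 2).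
Proof. by apply/idP/idP; case: fg_cases => -[-> ->]; nia. Qed.

Lemma pythag_family_complete (a b : nat) : 0 < P ->
  a ^ 2 + b ^ 2 = (b + f * P ^ 2) ^ 2 ->
  exists r, a = 2 * (P * r) + f * P ^ 2 /\ b = 2 * (P * r) + g * r ^ 2.
Proof.
move=> P_gt0 abc.
have a2 : a ^ 2 = P ^ 2 * (2 * (f * b) + (f * P) ^ 2) by nia.
have /dvdnP [s a_eq] : P %| a.
  by rewrite -(dvdn_pexp2r _ _ (isT : 0 < 2)) a2 dvdn_mulr.
have s2 : s ^ 2 = 2 * (f * b) + (f * P) ^ 2.
  apply/eqP; rewrite -(eqn_pmul2l (_ : 0 < P ^ 2)) ?expn_gt0 ?P_gt0 //.
  by rewrite -a2 a_eq expnMn mulnC.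
have [r [s_eq fb]] := sqr_eq_double_add_sqr _ _ _ s2.
exists r; rewrite a_eq s_eq.
by case: fg_cases => -[fE gE]; rewrite fE gE in fb *; nia.
Qed.

End PythagoreanFamily.

Definition gpar (p : nat) : nat := 2 %/ fpar p.

Lemma fpar_mul_gpar (p : nat) : fpar p * gpar p = 2.
Proof. by rewrite /gpar /fpar; case: (p == 2). Qed.

Lemma dparE (p k : nat) : dpar p k = fpar p * (p ^ k) ^ 2.
Proof. by rewrite /dpar -expnM (mulnC k). Qed.

Lemma dpar_expn (p k : nat) : dpar p k = p ^ (2 * k + (p == 2)).
Proof.
rewrite /dpar /fpar; case: eqP => [-> | _] /=; first by rewrite addn1 expnS.
by rewrite addn0 mul1n.
Qed.

Lemma triple_aE (p k r : nat) :
  triple_a p k r = 2 * (p ^ k * r) + fpar p * (p ^ k) ^ 2.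
Proof. by rewrite /triple_a dparE. Qed.

Lemma triple_bE (p k r : nat) :
  triple_b p k r = 2 * (p ^ k * r) + gpar p * r ^ 2.
Proof.
rewrite /triple_b; congr (_ + _); rewrite -{1}(fpar_mul_gpar p) -mulnA mulKn //.
by rewrite /fpar; case: (p == 2).
Qed.

Lemma DPT_triple (p k r : nat) : 0 < p ->
  DPT (triple_a p k r) (triple_b p k r) (triple_c p k r)
  <-> (fpar p * p ^ k) ^ 2 < 2 * r ^ 2.
Proof.
move=> p_gt0.
have d_gt0 : 0 < fpar p * (p ^ k) ^ 2 by rewrite -dparE dpar_expn expn_gt0 p_gt0.
rewrite /DPT /triple_c dparE triple_aE triple_bE.
rewrite pythag_family_lt ?fpar_mul_gpar //.
split=> [[] // | a_lt_b]; split=> //.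
- exact: ltn_addl.
- by rewrite -{1}(addn0 (_ + _)) ltn_add2l.
- exact: pythag_family (fpar_mul_gpar p) r.
Qed.

Lemma prime_dvd_triple_b (p k r : nat) : prime p -> 1 < dpar p k ->
  (p %| triple_b p k r) = (p %| r).
Proof.
move=> p_pr d_gt1.
have p_dvd_2P : p %| 2 * p ^ k.
  case: (eqVneq p 2) => [-> | p_neq2]; first exact: dvdn_mulr.
  rewrite dpar_expn (negbTE p_neq2) addn0 in d_gt1.
  by case: k d_gt1 => [|k] // _; rewrite expnS mulnCA dvdn_mulr.
have p_ndvd_g : ~~ (p %| gpar p).
  rewrite /gpar /fpar; case: eqP => [_ | /eqP p_neq2].
  - by rewrite dvdn1 neq_ltn prime_gt1 ?orbT.
  - by rewrite divn1 dvdn_prime2.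
rewrite triple_bE dvdn_addr; last by rewrite mulnA dvdn_mulr.
by rewrite Euclid_dvdM // (negbTE p_ndvd_g) Euclid_dvdX // andbT.
Qed.

Lemma IDPT_triple (p k r : nat) : prime p ->
  DPT (triple_a p k r) (triple_b p k r) (triple_c p k r) ->
  IDPT (triple_a p k r) (triple_b p k r) (triple_c p k r)
  <-> (1 < dpar p k -> ~~ (p %| r)).
Proof.
move=> p_pr; rewrite /triple_c dpar_expn => dpt.
rewrite IDPT_add_prime_power // -dpar_expn.
by split=> ndvd d_gt1; move: (ndvd d_gt1); rewrite prime_dvd_triple_b.
Qed.

Lemma admissibleE (p k r : nat) : admissible p k r <->
  [/\ 0 < r, (fpar p * p ^ k) ^ 2 <= 2 * r ^ 2 & (1 < dpar p k -> ~~ (p %| r))].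
Proof.
have fd : fpar p * dpar p k = (fpar p * p ^ k) ^ 2.
  by rewrite dparE expnMn mulnA mulnn.
by rewrite /admissible -fd; split=> -[r_gt0 /Rceil_sqrt_half_le le_r ndvd].
Qed.

Theorem theorem4 (p k : nat) (hp : prime p) :
  (forall r : nat, admissible p k r ->
     IDPT (triple_a p k r) (triple_b p k r) (triple_c p k r)) /\
  (forall a b c : nat, IDPT a b c -> c - b = dpar p k ->
     exists r : nat, admissible p k r /\
       [/\ a = triple_a p k r, b = triple_b p k r & c = triple_c p k r]).
Proof.
have p_gt0 := prime_gt0 hp.
split=> [r /admissibleE [r_gt0 le_r ndvd] | a b c idpt cb].
- have lt_r : (fpar p * p ^ k) ^ 2 < 2 * r ^ 2.
    by rewrite ltn_neqAle le_r sqr_neq_double_sqr.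
  have dpt := (DPT_triple p k r p_gt0).2 lt_r.
  exact/(IDPT_triple p k r hp dpt).
- have [dpt _] := idpt; have [_ _ b_lt_c pyth] := dpt.
  have cE : c = b + dpar p k by rewrite -cb subnKC // ltnW.
  rewrite cE dparE in pyth.
  have P_gt0 : 0 < p ^ k by rewrite expn_gt0 p_gt0.
  have [r [aE bE]] := pythag_family_complete (fpar_mul_gpar p) _ _ P_gt0 pyth.
  rewrite -triple_aE in aE; rewrite -triple_bE in bE.
  have {}cE : c = triple_c p k r by rewrite cE bE.
  subst a b c; exists r; split=> //.
  have r_gt0 : 0 < r.
    case: (posnP r) => // r0; have [_] := dpt; rewrite triple_bE r0; lia.
  apply/admissibleE; split=> //; first exact/ltnW/(DPT_triple p k r p_gt0).
  exact: (IDPT_triple p k r hp dpt).1 idpt.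
Qed.
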